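(* Let $L_0$ be a normal modal logic with $\mathbf{T}\subseteq L_0$. Suppose $L_0$ is complete with respect to a class $C$ of Kripke frames or general frames such that for every $\mathcal W\in C$ the frame $2\mathcal W$ is an $L_0$-frame. Then $L_0$ has the strong boxdot property: for every normal modal logic $L$, if $\mathrm{BD}(L)\subseteq L_0$ then $L\subseteq L_0$.
   Context: Modal formulas are built from propositional variables with Boolean connectives and a single modality $\Box$. A normal modal logic (nml) is a set of formulas containing all classical tautologies and $\Box(p\to q)\to(\Box p\to\Box q)$, and closed under modus ponens, necessitation and substitution. $\mathbf K$ is the smallest nml, and $\mathbf T=\mathbf K\oplus(\Box p\to p)$. The boxdot translation $\varphi\mapsto\varphi^{\boxdot}$ fixes propositional variables, commutes with Boolean connectives, and satisfies $(\Box\varphi)^{\boxdot}=\boxdot\varphi^{\boxdot}$, where $\boxdot\psi$ abbreviates $\psi\wedge\Box\psi$. For an nml $L$, let $\mathrm{BD}(L)=\{\varphi:\varphi^{\boxdot}\in L\}$. A general frame is a triple $\langle W,R,A\rangle$ where $R\subseteq W\times W$ and $A\subseteq\mathcal P(W)$ is closed under Boolean operations and under $\Box X=\{w:\forall v\,(wRv\Rightarrow v\in X)\}$. Models based on it are those in which every variable denotes a set in $A$. A formula is valid in the frame if it holds at every point of every model based on the frame. A Kripke frame $\langle W,R\rangle$ is identified with $\langle W,R,\mathcal P(W)\rangle$. A frame is an $L$-frame if all formulas of $L$ are valid in it. $L$ is complete with respect to $C$ if every $\varphi\notin L$ is invalid in some frame of $C$. For a Kripke frame $\mathcal W=\langle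 W,R\rangle$, the frame $2\mathcal W=\langle 2W,2R\rangle$ is defined by $2W=W\times\{0,1\}$ and $\langle w,a\rangle\,2R\,\langle v,b\rangle$ iff $wRv$. For a general frame $\langle W,R,A\rangle$, $2\mathcal W=\langle 2W,2R,2A\rangle$ with $2A=\{(X\times\{0\})\cup(Y\times\{1\}):X,Y\in A\}$. *)

From Stdlib Require Import Bool.

Inductive form : Type :=
| Var : nat -> form
| Bot : form
| Neg : form -> form
| And : form -> form -> form
| Or  : form -> form -> form
| Imp : form -> form -> form
| Box : form -> form.

Fixpoint peval (v : nat -> bool) (b : form -> bool) (f : form) : bool :=
  match f with
  | Var n => v n
  | Bot => false
  | Neg g => negb (peval v b g)
  | And g h => peval v b g && peval v b h
  | Or g h => peval v b g || peval v b h
  | Imp g h => implb (peval v b g) (peval v b h)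
  | Box g => b g
  end.

Definition tautology (f : form) : Prop :=
  forall (v : nat -> bool) (b : form -> bool), peval v b f = true.

Fixpoint subst (s : nat -> form) (f : form) : form :=
  match f with
  | Var n => s n
  | Bot => Bot
  | Neg g => Neg (subst s g)
  | And g h => And (subst s g) (subst s h)
  | Or g h => Or (subst s g) (subst s h)
  | Imp g h => Imp (subst s g) (subst s h)
  | Box g => Box (subst s g)
  end.

Definition p0 : form := Var 0.
Definition p1 : form := Var 1.

Definition logic := form -> Prop.

Definition incl (L1 L2 : logic) : Prop := forall f, L1 f -> L2 f.

Definition nml (L : logic) : Prop :=
  (forall f, tautology f -> L f) /\
  L (Imp (Box (Imp p0 p1)) (Imp (Box p0) (Box p1))) /\
  (forall f g, L (Imp f g) -> L f -> L g) /\
  (forall f, L f -> L (Box f)) /\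
  (forall s f, L f -> L (subst s f)).

Definition LogicT : logic :=
  fun f => forall L, nml L -> L (Imp (Box p0) p0) -> L f.

Fixpoint boxdot (f : form) : form :=
  match f with
  | Var n => Var n
  | Bot => Bot
  | Neg g => Neg (boxdot g)
  | And g h => And (boxdot g) (boxdot h)
  | Or g h => Or (boxdot g) (boxdot h)
  | Imp g h => Imp (boxdot g) (boxdot h)
  | Box g => And (boxdot g) (Box (boxdot g))
  end.

Definition BD (L : logic) : logic := fun f => L (boxdot f).

Record gframe : Type := GFrame {
  gW : Type;
  gR : gW -> gW -> Prop;
  gA : (gW -> Prop) -> Prop
}.

Definition boxset {W : Type} (R : W -> W -> Prop) (X : W -> Prop) : W -> Prop :=
  fun w => forall v, R w v -> X v.

Definition is_gframe (F : gframe) : Prop :=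
  (forall X Y, (forall w, X w <-> Y w) -> gA F X -> gA F Y) /\
  gA F (fun _ => False) /\
  (forall X, gA F X -> gA F (fun w => ~ X w)) /\
  (forall X Y, gA F X -> gA F Y -> gA F (fun w => X w /\ Y w)) /\
  (forall X Y, gA F X -> gA F Y -> gA F (fun w => X w \/ Y w)) /\
  (forall X, gA F X -> gA F (boxset (gR F) X)).

Definition kripke (W : Type) (R : W -> W -> Prop) : gframe :=
  GFrame W R (fun _ => True).

Fixpoint sat {W : Type} (R : W -> W -> Prop) (V : nat -> W -> Prop)
  (w : W) (f : form) : Prop :=
  match f with
  | Var n => V n w
  | Bot => False
  | Neg g => ~ sat R V w g
  | And g h => sat R V w g /\ sat R V w h
  | Or g h => sat R V w g \/ sat R V w h
  | Imp g h => sat R V w g -> sat R V w h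
  | Box g => forall v, R w v -> sat R V v g
  end.

Definition valid (F : gframe) (f : form) : Prop :=
  forall V : nat -> gW F -> Prop, (forall n, gA F (V n)) ->
  forall w, sat (gR F) V w f.

Definition is_L_frame (L : logic) (F : gframe) : Prop :=
  forall f, L f -> valid F f.

Definition complete_wrt (L : logic) (C : gframe -> Prop) : Prop :=
  forall f, ~ L f -> exists F, C F /\ ~ valid F f.

Definition double (F : gframe) : gframe :=
  GFrame (gW F * bool)
    (fun p q => gR F (fst p) (fst q))
    (fun Z => exists X Y, gA F X /\ gA F Y /\
       forall p, Z p <-> (if snd p then Y (fst p) else X (fst p))).

Definition strong_boxdot_property (L0 : logic) : Prop :=
  forall L, nml L -> incl (BD L) L0 -> incl L L0.

From Stdlib Require Import Classical.

(* Reserve the variable [q = Var 0] as a marker telling apart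
   the two copies [W x {0,1}] of a doubled frame, and shift every other
   variable up by one.  The translation [twin f] rewrites each [Box g] as
   "Box g holds on the opposite copy", and [coherent f] says that, for every
   boxed subformula, looking at either copy gives the same answer.
   (1) Syntax: in any nml, [boxdot (coherent f)] proves that
       [boxdot (twin f)] is equivalent to the shifted [f]; hence for every
       theorem [f] of an nml [L], the formula [coherent f -> twin f] lies in
       [BD L].
   (2) Semantics: on [double F], under the valuation putting [q] on copy 1
       and the shifted variables on both copies, [coherent f] is true
       everywhere and [twin f] holds at [(w, b)] iff [f] holds at [w]; this
       valuation is admissible.  So validity of [coherent f -> twin f] in
       [double F] implies validity of [f] in [F].
   The theorem follows: a theorem [f] of [L] outside [L0] is refuted on some
   [F] in [C], while [coherent f -> twin f] is in [BD L], hence in [L0], hence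
   valid on the [L0]-frame [double F]. *)

Notation Iff a b := (And (Imp a b) (Imp b a)).

Definition q : form := Var 0.
Definition Top : form := Imp Bot Bot.

Definition shift (f : form) : form := subst (fun n => Var (S n)) f.

(* Translation in which [Box g], evaluated on one copy, quantifies only over
   the successors lying on the opposite copy. *)
Fixpoint twin (f : form) : form :=
  match f with
  | Var n => Var (S n)
  | Bot => Bot
  | Neg g => Neg (twin g)
  | And g h => And (twin g) (twin h)
  | Or g h => Or (twin g) (twin h)
  | Imp g h => Imp (twin g) (twin h)
  | Box g => And (Imp (Neg q) (Box (Imp q (twin g))))
                 (Imp q (Box (Imp (Neg q) (twin g))))
  end.

(* Every boxed subformula has the same successors' value on both copies,
   hereditarily along the accessibility relation. *)
Fixpoint coherent (f : form) : form :=
  match f with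
  | Var _ | Bot => Top
  | Neg g => coherent g
  | And g h | Or g h | Imp g h => And (coherent g) (coherent h)
  | Box g => And (Iff (Box (Imp (Neg q) (twin g))) (Box (Imp q (twin g))))
                 (Box (coherent g))
  end.

Ltac prove_tautology :=
  unfold tautology; intros ?v ?b; unfold shift, q in *; simpl;
  repeat match goal with
  | |- context [?bb ?x] =>
      match type of bb with
      | form -> bool => destruct (bb x)
      | nat -> bool => destruct (bb x)
      end
  end; reflexivity.

Section NormalLogic.

Variable L : logic.
Hypothesis HL : nml L.

Lemma nml_taut f : tautology f -> L f.
Proof. apply HL. Qed.

Lemma nml_mp f g : L (Imp f g) -> L f -> L g.
Proof. apply HL. Qed.

Lemma nml_nec f : L f -> L (Box f).
Proof. apply HL. Qed.

Lemma nml_taut_mp1 a b : tautology (Imp a b) -> L a -> L b.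
Proof. intros T Ha. apply (nml_mp a); auto using nml_taut. Qed.

Lemma nml_taut_mp2 a b c : tautology (Imp a (Imp b c)) -> L a -> L b -> L c.
Proof. intros T Ha Hb. apply (nml_mp b); auto. apply (nml_mp a); auto using nml_taut. Qed.

Lemma nml_taut_mp5 a1 a2 a3 a4 a5 g :
  tautology (Imp a1 (Imp a2 (Imp a3 (Imp a4 (Imp a5 g))))) ->
  L a1 -> L a2 -> L a3 -> L a4 -> L a5 -> L g.
Proof.
  intros T H1 H2 H3 H4 H5.
  apply (nml_mp a5); auto. apply (nml_mp a4); auto. apply (nml_mp a3); auto.
  apply (nml_mp a2); auto. apply (nml_mp a1); auto using nml_taut.
Qed.

Lemma nml_K x y : L (Imp (Box (Imp x y)) (Imp (Box x) (Box y))).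
Proof.
  destruct HL as [_ [HK [_ [_ Hsubst]]]].
  exact (Hsubst (fun n => match n with 0 => x | 1 => y | _ => Var n end) _ HK).
Qed.

Lemma nml_box_imp2 a x y :
  L (Imp a (Imp x y)) -> L (Imp (Box a) (Imp (Box x) (Box y))).
Proof.
  intros H.
  assert (H1 := nml_mp _ _ (nml_K a (Imp x y)) (nml_nec _ H)).
  eapply nml_taut_mp2; [| exact H1 | exact (nml_K x y)]. prove_tautology.
Qed.

Lemma boxdot_twin_equiv f :
  L (Imp (boxdot (coherent f)) (Iff (boxdot (twin f)) (shift f))).
Proof.
  induction f; simpl.
  - apply nml_taut; prove_tautology.
  - apply nml_taut; prove_tautology.
  - eapply nml_taut_mp1; [| exact IHf]. prove_tautology.
  - eapply nml_taut_mp2; [| exact IHf1 | exact IHf2]. prove_tautology.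
  - eapply nml_taut_mp2; [| exact IHf1 | exact IHf2]. prove_tautology.
  - eapply nml_taut_mp2; [| exact IHf1 | exact IHf2]. prove_tautology.
  - change (shift (Box f)) with (Box (shift f)).
    set (t := boxdot (twin f)) in *; set (s := shift f) in *;
    set (c := boxdot (coherent f)) in *; clearbody t s c.
    (* Box the induction hypothesis restricted to either copy, in both
       directions, and note that a formula true on both copies is true. *)
    assert (Tq : L (Imp (Box c) (Imp (Box (Imp q t)) (Box (Imp q s))))).
    { apply nml_box_imp2. eapply nml_taut_mp1; [| exact IHf]. prove_tautology. }
    assert (Tnq : L (Imp (Box c) (Imp (Box (Imp (Neg q) t)) (Box (Imp (Neg q) s))))).
    { apply nml_box_imp2. eapply nml_taut_mp1; [| exact IHf]. prove_tautology. }
    assert (Sq : L (Imp (Box c) (Imp (Box s) (Box (Imp q t))))).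
    { apply nml_box_imp2. eapply nml_taut_mp1; [| exact IHf]. prove_tautology. }
    assert (Snq : L (Imp (Box c) (Imp (Box s) (Box (Imp (Neg q) t))))).
    { apply nml_box_imp2. eapply nml_taut_mp1; [| exact IHf]. prove_tautology. }
    assert (Both : L (Imp (Box (Imp q s)) (Imp (Box (Imp (Neg q) s)) (Box s)))).
    { apply nml_box_imp2. apply nml_taut. prove_tautology. }
    eapply nml_taut_mp5; [| exact Tq | exact Tnq | exact Sq | exact Snq | exact Both].
    prove_tautology.
Qed.

Lemma BD_coherent_twin f : L f -> BD L (Imp (coherent f) (twin f)).
Proof.
  intros Hf. unfold BD; simpl.
  assert (Hs : L (shift f)) by (apply HL; exact Hf).
  eapply nml_taut_mp2; [| exact (boxdot_twin_equiv f) | exact Hs]. prove_tautology.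
Qed.

End NormalLogic.

Section DoubledFrame.

Variable F : gframe.
Variable V : nat -> gW F -> Prop.

Definition double_val : nat -> gW F * bool -> Prop :=
  fun n p => match n with 0 => snd p = true | S m => V m (fst p) end.

Local Notation sat2 := (sat (gR (double F)) double_val).

Lemma sat_twin f p : sat2 p (twin f) <-> sat (gR F) V (fst p) f.
Proof.
  revert p; induction f; intros p; simpl;
    try rewrite ?IHf, ?IHf1, ?IHf2; try tauto.
  destruct p as [x [|]]; simpl; split.
  - intros [_ H] y Hy. apply (IHf (y, false)), (H eq_refl (y, false)); auto. discriminate.
  - intros H. split; [intros N; contradiction N; reflexivity|].
    intros _ [y c] Hy _. apply IHf, H, Hy.
  - intros [H _] y Hy. apply (IHf (y, true)), (H ltac:(discriminate) (y, true)); auto.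
  - intros H. split; [|discriminate].
    intros _ [y c] Hy _. apply IHf, H, Hy.
Qed.

Lemma sat_coherent f p : sat2 p (coherent f).
Proof.
  revert p; induction f; intros p; simpl;
    [tauto | tauto | apply IHf | split; auto .. |].
  assert (Hcopy : forall b : bool,
      (forall v : gW F * bool, gR F (fst p) (fst v) ->
         (if b then snd v = true else ~ snd v = true) -> sat2 v (twin f))
      <-> forall y, gR F (fst p) y -> sat (gR F) V y f).
  { intros b; split.
    - intros H y Hy. apply (sat_twin f (y, b)), (H (y, b)); auto.
      destruct b; [reflexivity | discriminate].
    - intros H v Hv _. apply sat_twin, H, Hv. }
  split; [|intros v _; apply IHf].
  split; intros H; [apply (Hcopy true), (Hcopy false) | apply (Hcopy false), (Hcopy true)];
    exact H.
Qed.

Lemma double_val_admissible :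
  is_gframe F -> (forall n, gA F (V n)) -> forall n, gA (double F) (double_val n).
Proof.
  intros [_ [Hempty [Hcompl _]]] HV [|m]; simpl.
  - exists (fun _ => False), (fun _ => ~ False).
    split; [exact Hempty | split; [exact (Hcompl _ Hempty) |]].
    intros [x [|]]; simpl; split; auto; try discriminate; tauto.
  - exists (V m), (V m). split; [apply HV | split; [apply HV |]].
    intros [x [|]]; simpl; tauto.
Qed.

End DoubledFrame.

Lemma valid_of_valid_double (F : gframe) f :
  is_gframe F -> valid (double F) (Imp (coherent f) (twin f)) -> valid F f.
Proof.
  intros HF Hv V HV w.
  apply (sat_twin F V f (w, false)).
  apply (Hv _ (double_val_admissible F V HF HV)), sat_coherent.
Qed.

Theorem mainTheorem1 (L0 : logic) (C : gframe -> Prop) :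
  nml L0 -> incl LogicT L0 ->
  (forall F, C F -> is_gframe F) ->
  complete_wrt L0 C ->
  (forall F, C F -> is_L_frame L0 (double F)) ->
  strong_boxdot_property L0.
Proof.
  intros _ _ HCframe Hcomplete Hdouble L HL HBD f Hf.
  destruct (classic (L0 f)) as [Hin | Hout]; [exact Hin | exfalso].
  destruct (Hcomplete f Hout) as [F [HCF Hrefuted]].
  apply Hrefuted, (valid_of_valid_double F f (HCframe F HCF)).
  apply (Hdouble F HCF), HBD, BD_coherent_twin; assumption.
Qed.
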